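(* Let $(G,\phi)$ be a test-fee structure. If $\phi_t<\int_{\mu+\phi_d}^{\overline{\theta}}[s-(\mu+\phi_d)]\,dG(s)$, then in every equilibrium of the induced game the asset is tested with probability $1$; otherwise, there exists an equilibrium in which the asset is tested with probability $0$.
   Context: The asset value $\theta\sim F$ with support in $[\underline{\theta},\overline{\theta}]$ ($0\le\underline{\theta}<\overline{\theta}<\infty$ the extreme support points) and mean $\mu$. A test-fee structure $(G,\phi)$ consists of $G$, the marginal CDF of scores of an unbiased test (a stochastic map from $\theta$ to a score $s\in[\underline{\theta},\overline{\theta}]$ with $E[\theta\mid s]=s$), and fees $\phi=(\phi_t,\phi_d)\in\mathbb{R}^2$. In the induced game the agent, not observing $\theta$, decides whether to pay testing fee $\phi_t$ and privately observe $s$; then whether to pay disclosure fee $\phi_d$ to verifiably disclose $s$ to two buyers, who otherwise observe a null message $N$ and cannot tell whether a test occurred. Buyers bid in a first-price auction; the agent receives the price minus fees paid. Equilibrium means perfect Bayesian equilibrium (buyers share beliefs, so price equals the asset's conditional expected value). *)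

From HB Require Import structures.
From mathcomp Require Import all_boot all_order all_algebra.
From mathcomp Require Import all_classical all_reals all_analysis.
Set Implicit Arguments. Unset Strict Implicit. Unset Printing Implicit Defensive.
Import Order.TTheory GRing.Theory Num.Theory.
Local Open Scope classical_set_scope.
Local Open Scope ring_scope.

(* The primitives: a probability space (Omega, P) carrying the asset value
   theta and the test score sc (the test is the joint law of (theta, sc)).
   Strategy profile of the induced game:
   - tau : probability with which the agent tests;
   - dsc : s |-> probability of disclosing score s (after testing);
   - pN  : price (= buyers' common expected value of the asset) after the
           null message N.
   A disclosed score s fetches price E[theta | s] = s (unbiasedness). *)

Section Game.
Context (R : realType) (dd : measure_display) (Omega : measurableType dd)
        (P : probability Omega R) (theta sc : {RV P >-> R})
        (thl thh phit phid : R).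

Definition test_payoff (dsc : R -> R) (pN : R) : \bar R :=
  ((- phit)%:E + \int[P]_w (dsc (sc w) * (sc w - phid)
                            + (1 - dsc (sc w)) * pN)%:E)%E.

Definition prob_null (tau : R) (dsc : R -> R) : \bar R :=
  ((1 - tau)%:E + tau%:E * \int[P]_w (1 - dsc (sc w))%:E)%E.

Definition value_null (tau : R) (dsc : R -> R) : \bar R :=
  ((1 - tau)%:E * \int[P]_w (theta w)%:E
   + tau%:E * \int[P]_w (theta w * (1 - dsc (sc w)))%:E)%E.

Definition equilibrium (tau : R) (dsc : R -> R) (pN : R) : Prop :=
  [/\ 0 <= tau <= 1,
      measurable_fun setT dsc /\ (forall s, 0 <= dsc s <= 1),
      (forall s, thl <= s <= thh ->
          (0 < dsc s -> pN <= s - phid) /\ (dsc s < 1 -> s - phid <= pN)),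
      (0 < tau -> (pN%:E <= test_payoff dsc pN)%E) /\
      (tau < 1 -> (test_payoff dsc pN <= pN%:E)%E) &
      (* buyers' beliefs: supported on [thl, thh], Bayes' rule on path *)
      thl <= pN <= thh /\
      ((0 < prob_null tau dsc)%E ->
          (pN%:E * prob_null tau dsc = value_null tau dsc)%E)].

End Game.

From mathcomp Require Import all_boot all_order all_algebra.
From mathcomp Require Import all_classical all_reals all_analysis.
From mathcomp Require Import measurable_realfun ring lra.
Set Implicit Arguments. Unset Strict Implicit. Unset Printing Implicit Defensive.
Import Order.TTheory GRing.Theory Num.Theory.
Local Open Scope classical_set_scope.
Local Open Scope ring_scope.

(* Suppose the agent skips the test with positive probability, and let pN be
   the price after the null message.  The null message then comes from
   untested assets, worth mu on average, and from tested assets whose score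
   fell below the disclosure threshold pN + phid; by unbiasedness the latter
   are worth at most mu on average, so Bayes' rule gives pN <= mu.  But at
   such a price, testing and then disclosing optimally earns at least
   pN + E[(s - mu - phid)^+] - phit > pN, so skipping the test is not
   optimal.  Conversely, when E[(s - mu - phid)^+] <= phit, never testing,
   pricing the null message at mu and disclosing exactly the scores above
   mu + phid is an equilibrium. *)

Lemma EFin_Rintegral d (T : measurableType d) (R : realType)
    (mu : {measure set T -> \bar R}) (D : set T) (f : T -> R) :
  measurable D -> mu.-integrable D (EFin \o f) ->
  (\int[mu]_(x in D) f x)%:E = (\int[mu]_(x in D) (f x)%:E)%E.
Proof. by move=> mD fi; rewrite /Rintegral fineK //; exact: integrable_fin_num. Qed.

Section probability_integrals.
Context d (T : measurableType d) (R : realType) (P : probability T R).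

Lemma Rintegral_cst_probability (r : R) : \int[P]_x r = r.
Proof. by rewrite Rintegral_cst //; have /= -> := probability_setT P; rewrite mulr1. Qed.

Lemma integrableMl01 (f k : T -> R) : P.-integrable setT (EFin \o f) ->
  measurable_fun setT k -> (forall x, 0 <= k x <= 1) ->
  P.-integrable setT (EFin \o (f \* k)).
Proof.
move=> fi mk k01; have -> : EFin \o (f \* k) = ((EFin \o f) \* (EFin \o k))%E.
  by apply/funext => x /=; rewrite EFinM.
apply: integrableMl => //; exists 1; split => // M M1 x _ /=.
have /andP[k0 k1] := k01 x.
by rewrite ger0_norm // (le_trans k1 (ltW M1)).
Qed.

Lemma integrableMr01 (k f : T -> R) : P.-integrable setT (EFin \o f) ->
  measurable_fun setT k -> (forall x, 0 <= k x <= 1) ->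
  P.-integrable setT (EFin \o (k \* f)).
Proof.
move=> fi mk k01; rewrite (_ : k \* f = f \* k); last by apply/funext => x; exact: mulrC.
exact: integrableMl01.
Qed.

Lemma probability_setI1 (A B : set T) : measurable A -> measurable B ->
  P A = 1%E -> P B = 1%E -> P (A `&` B) = 1%E.
Proof.
move=> mA mB PA PB; have mAB : measurable (~` A `|` ~` B).
  by apply: measurableU; exact: measurableC.
have PAC : P (~` A) = 0%E by rewrite probability_setC // PA subee.
have PBC : P (~` B) = 0%E by rewrite probability_setC // PB subee.
rewrite -[A `&` B]setCK setCI probability_setC //.
suff -> : P (~` A `|` ~` B) = 0%E by rewrite sube0.
apply/eqP; rewrite eq_le measure_ge0 andbT.
apply: le_trans (measureU2 _ _ _) _; try exact: measurableC.
have null_sum : (P (~` A) + P (~` B) <= 0)%E by rewrite PAC PBC adde0.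
exact: null_sum.
Qed.

Variables (S : set T) (mS : measurable S) (PS : P S = 1%E).

Let PSC : P (~` S) = 0%E.
Proof. by rewrite probability_setC // PS subee. Qed.

Lemma full_ae (Q : T -> Prop) : (forall x, S x -> Q x) -> {ae P, forall x, Q x}.
Proof.
move=> SQ; exists (~` S); split => //; first exact: measurableC.
by move=> x /= nQx Sx; exact/nQx/SQ.
Qed.

Lemma integrable_bounded_full (f : T -> R) (M : R) : measurable_fun setT f ->
  (forall x, S x -> `|f x| <= M) -> P.-integrable setT (EFin \o f).
Proof.
move=> mf fM; apply/integrableP; split; first exact/measurable_EFinP.
apply: (@le_lt_trans _ _ (\int[P]_x (cst `|M|%:E) x)%E).
  apply: ae_ge0_le_integral => //.
  - by do 2 apply: measurableT_comp => //.
  - by move=> x _ /=; rewrite lee_fin.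
  - apply: full_ae => x Sx _ /=; rewrite lee_fin.
    exact: le_trans (fM x Sx) (ler_norm M).
by rewrite integral_cst //; have /= -> := probability_setT P; rewrite mule1 ltry.
Qed.

Lemma Rintegral_full (f : T -> R) : P.-integrable setT (EFin \o f) ->
  \int[P]_x f x = \int[P]_(x in S) f x.
Proof.
move=> fi; rewrite /Rintegral (negligible_integral _ _ fi PSC) //; last first.
  exact: measurableC.
by rewrite setTD setCK.
Qed.

Lemma eq_Rintegral_full (f g : T -> R) :
  measurable_fun setT f -> measurable_fun setT g ->
  (forall x, S x -> f x = g x) -> \int[P]_x f x = \int[P]_x g x.
Proof.
move=> mf mg fg; congr fine; apply: ae_eq_integral => //; try exact/measurable_EFinP.
by apply: full_ae => x Sx _; rewrite fg.
Qed.

Lemma le_Rintegral_full (f g : T -> R) :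
  P.-integrable setT (EFin \o f) -> P.-integrable setT (EFin \o g) ->
  (forall x, S x -> f x <= g x) -> \int[P]_x f x <= \int[P]_x g x.
Proof.
move=> fi gi fg; rewrite (Rintegral_full fi) (Rintegral_full gi).
by apply: le_Rintegral => //; exact: integrableS measurableT mS (@subsetT _ _) _.
Qed.

End probability_integrals.

Lemma indic01 (T : Type) (R : numDomainType) (B : set T) (x : T) :
  0 <= (\1_B x : R) <= 1.
Proof. by rewrite indicE; case: (x \in B); rewrite ?lexx ?ler01. Qed.

Lemma between_norm_le (R : realDomainType) (a b x : R) :
  a <= x <= b -> `|x| <= `|a| + `|b|.
Proof.
move=> /andP[ax xb]; rewrite ler_norml.
have := ler_norm b; have := ler_norm (- a); rewrite normrN.
have := normr_ge0 a; have := normr_ge0 b; lra.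
Qed.

Lemma optimal_mix_max (R : realDomainType) (d a b : R) : 0 <= d <= 1 ->
  (0 < d -> b <= a) -> (d < 1 -> a <= b) -> d * a + (1 - d) * b = Num.max a b.
Proof.
move=> /andP[d0 d1] da db; have [d_gt0|d_le0] := ltP 0 d; last first.
  have d_eq0 : d = 0 by apply/eqP; rewrite eq_le d_le0 d0.
  rewrite d_eq0 in db *.
  by rewrite mul0r add0r subr0 mul1r max_r // db // ltr01.
have [d_lt1|d_ge1] := ltP d 1; last first.
  have d_eq1 : d = 1 by apply/eqP; rewrite eq_le d1 d_ge1.
  rewrite d_eq1 in da *.
  by rewrite mul1r subrr mul0r addr0 max_l // da // ltr01.
have ab : a = b by apply/eqP; rewrite eq_le da // db.
by rewrite ab maxxx -mulrDl addrC subrK mul1r.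
Qed.

Lemma threshold_cov_le0 (R : realDomainType) (s c h q : R) : 0 <= q <= 1 ->
  (s < c -> h = 1) -> (c < s -> h = 0) -> (s - c) * (h - q) <= 0.
Proof.
move=> /andP[q0 q1] below above; have [sc|cs|->] := ltgtP s c.
- by rewrite below // nmulr_rle0 ?subr_lt0 // subr_ge0.
- by rewrite above // pmulr_rle0 ?subr_gt0 // sub0r oppr_le0.
- by rewrite subrr mul0r.
Qed.

Section induced_game.
Context (R : realType) (dd : measure_display) (Omega : measurableType dd)
  (P : probability Omega R) (theta sc : {RV P >-> R}) (thl thh mu phit phid : R).
Hypotheses (theta_between : P [set w | thl <= theta w <= thh] = 1%E)
  (theta_mean : (\int[P]_w (theta w)%:E)%E = mu%:E)
  (sc_between : P [set w | thl <= sc w <= thh] = 1%E)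
  (unbiased : forall B : set R, measurable B ->
     (\int[P]_(w in sc @^-1` B) (theta w)%:E =
      \int[P]_(w in sc @^-1` B) (sc w)%:E)%E).

Let S := [set w | thl <= sc w <= thh] `&` [set w | thl <= theta w <= thh].

Let measurable_between (X : {RV P >-> R}) : measurable [set w | thl <= X w <= thh].
Proof.
rewrite (_ : [set w | _] = X @^-1` `[thl, thh]); first exact: measurable_funPTI.
by apply/seteqP; split => w /=; rewrite in_itv.
Qed.

Let mS : measurable S.
Proof. exact: measurableI. Qed.

Let PS : P S = 1%E.
Proof. exact: probability_setI1. Qed.

Let integrable_between (X : {RV P >-> R}) :
  (forall w, S w -> thl <= X w <= thh) -> P.-integrable setT (EFin \o X).
Proof.
move=> XS; apply: (integrable_bounded_full mS PS (M := `|thl| + `|thh|)) => //.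
by move=> w /XS; exact: between_norm_le.
Qed.

Let integrable_theta : P.-integrable setT (EFin \o theta).
Proof. by apply: integrable_between => w []. Qed.

Let integrable_sc : P.-integrable setT (EFin \o sc).
Proof. by apply: integrable_between => w []. Qed.

Let integrable_cst (r : R) : P.-integrable setT (EFin \o cst r).
Proof. exact: finite_measure_integrable_cst. Qed.

Let integrable_sc_sub (r : R) : P.-integrable setT (EFin \o (fun w => sc w - r)) :=
  integrableB measurableT integrable_sc (integrable_cst r).

Let Rintegral_theta : \int[P]_w theta w = mu.
Proof. by rewrite /Rintegral theta_mean. Qed.

Let Rintegral_sc : \int[P]_w sc w = mu.
Proof. by have := unbiased measurableT; rewrite preimage_setT /Rintegral => <-. Qed.

Lemma mean_between : thl <= mu <= thh.
Proof.
rewrite -Rintegral_theta -(Rintegral_cst_probability P thl).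
rewrite -(Rintegral_cst_probability P thh).
by apply/andP; split; apply: (le_Rintegral_full mS PS) => // [|w [_ /andP[]] //];
  exact: integrable_cst.
Qed.

Let integrable_indic_sc (X : Omega -> R) (B : set R) : measurable B ->
  P.-integrable setT (EFin \o X) ->
  P.-integrable setT (EFin \o (fun w => X w * \1_B (sc w))).
Proof.
move=> mB Xi; apply: integrableMl01 => //; first exact: measurableT_comp.
by move=> w; exact: indic01.
Qed.

Lemma unbiased_indic (B : set R) : measurable B ->
  \int[P]_w (theta w * \1_B (sc w)) = \int[P]_w (sc w * \1_B (sc w)).
Proof.
move=> mB; have restrictE (X : Omega -> R) :
    \int[P]_w (X w * \1_B (sc w)) = \int[P]_(w in sc @^-1` B) X w.
  by rewrite [RHS]Rintegral_mkcond patch_indic.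
by rewrite !restrictE /Rintegral unbiased.
Qed.

Lemma unbiased_step (L E : set R) (b : R) : measurable L -> measurable E ->
  \int[P]_w (theta w * (\1_L (sc w) + b * \1_E (sc w))) =
  \int[P]_w (sc w * (\1_L (sc w) + b * \1_E (sc w))).
Proof.
move=> mL mE; have stepE (X : Omega -> R) : P.-integrable setT (EFin \o X) ->
    \int[P]_w (X w * (\1_L (sc w) + b * \1_E (sc w))) =
    \int[P]_w (X w * \1_L (sc w)) + b * \int[P]_w (X w * \1_E (sc w)).
  move=> Xi; have XE_int := integrable_indic_sc mE Xi.
  have bXE_int : P.-integrable setT (EFin \o (fun w => b * (X w * \1_E (sc w)))) :=
    integrableZl measurableT b XE_int.
  rewrite -RintegralZl // -RintegralD //; last exact: integrable_indic_sc.
  by apply: eq_Rintegral => w _; rewrite mulrDr mulrCA.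
by rewrite !stepE // !unbiased_indic.
Qed.

Let c := mu + phid.
Let J : set R := [set` `[c, thh]].

Let mJ : measurable J.
Proof. exact: measurable_itv. Qed.

Let gain w := \1_J (sc w) * (sc w - c).

Let integrable_gain : P.-integrable setT (EFin \o gain).
Proof.
apply: integrableMr01.
- exact: integrable_sc_sub.
- by apply: measurableT_comp => //; exact: measurable_indic.
- by move=> w; exact: indic01.
Qed.

Lemma gain_distribution :
  (\int[distribution P sc]_(s in `[c, thh]) (s - c)%:E)%E = (\int[P]_w gain w)%:E.
Proof.
rewrite EFin_Rintegral // -/J.
have -> : (\int[distribution P sc]_(s in J) (s - c)%:E =
           \int[distribution P sc]_s (\1_J s * (s - c))%:E)%E.
  rewrite integral_mkcond; apply: eq_integral => s _; rewrite patchE indicE.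
  by case: ifP; rewrite ?mul1r ?mul0r.
rewrite ge0_integral_distribution //.
- apply/measurable_EFinP/measurable_funM; first exact: measurable_indic.
  exact/measurable_funB.
- move=> s; rewrite indicE /J mem_setE in_itv /= lee_fin.
  by case: (boolP (c <= s <= thh)) => [/andP[cs _]|_]; rewrite ?mul0r // mul1r subr_ge0.
Qed.

Lemma null_price_gt_mean tau dsc pN : phit < \int[P]_w gain w ->
  equilibrium theta sc thl thh phit phid tau dsc pN -> tau < 1 -> mu < pN.
Proof.
move=> gain_gt [_ [mdsc dsc01] disc [_ no_test] _] tau_lt1.
rewrite ltNge; apply/negP => pN_le_mu.
pose pay w := dsc (sc w) * (sc w - phid) + (1 - dsc (sc w)) * pN.
have mdsc_sc : measurable_fun setT (dsc \o sc) by exact: measurableT_comp.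
have disclosed_int : P.-integrable setT (EFin \o (fun w => dsc (sc w) * (sc w - phid))).
  exact: integrableMr01.
have hidden_int : P.-integrable setT (EFin \o (fun w => (1 - dsc (sc w)) * pN)).
  apply: integrableMr01 => [||w]; [exact: integrable_cst|exact: measurable_funB|].
  by have /andP[d0 d1] := dsc01 (sc w); rewrite subr_ge0 d1 gerBl.
have pay_int : P.-integrable setT (EFin \o pay) :=
  integrableD measurableT disclosed_int hidden_int.
have pN_gain_int : P.-integrable setT (EFin \o (fun w => pN + gain w)) :=
  integrableD measurableT (integrable_cst pN) integrable_gain.
have pay_ge : pN + \int[P]_w gain w <= \int[P]_w pay w.
  rewrite -[pN in leLHS](Rintegral_cst_probability P) -RintegralD //; last first.
    exact: integrable_cst.
  apply: (le_Rintegral_full mS PS) => // w [/disc[to_disc to_hide] _].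
  rewrite /pay optimal_mix_max // le_max /gain indicE /J mem_setE in_itv /=.
  case: (boolP (c <= sc w <= thh)) => _ /=; rewrite ?mul1r ?mul0r ?addr0 ?lexx ?orbT //.
  by rewrite /c in pN_le_mu *; apply/orP; left; lra.
have := no_test tau_lt1; rewrite /test_payoff -EFin_Rintegral // -EFinD lee_fin.
lra.
Qed.

Section disclosure_rule.
Variable dsc : R -> R.
Hypotheses (mdsc : measurable_fun setT dsc) (dsc01 : forall s, 0 <= dsc s <= 1).

Let hide w := 1 - dsc (sc w).

Let measurable_hide : measurable_fun setT hide.
Proof. by apply: measurable_funB => //; exact: measurableT_comp. Qed.

Let hide01 w : 0 <= hide w <= 1.
Proof. by have /andP[d0 d1] := dsc01 (sc w); rewrite subr_ge0 d1 gerBl. Qed.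

Let integrable_hide : P.-integrable setT (EFin \o hide).
Proof.
apply: (integrable_bounded_full mS PS (M := 1)) => // w _.
by have /andP[h0 h1] := hide01 w; rewrite ger0_norm.
Qed.

Let integrable_theta_hide : P.-integrable setT (EFin \o (theta \* hide)).
Proof. exact: integrableMl01. Qed.

Lemma prob_nullE tau :
  prob_null sc tau dsc = (1 - tau + tau * \int[P]_w (1 - dsc (sc w)))%:E.
Proof. by rewrite /prob_null -EFin_Rintegral. Qed.

Lemma value_nullE tau : value_null theta sc tau dsc =
  ((1 - tau) * mu + tau * \int[P]_w (theta w * (1 - dsc (sc w))))%:E.
Proof. by rewrite /value_null theta_mean -EFin_Rintegral. Qed.

Variable pN : R.
Hypothesis disc : forall s, thl <= s <= thh ->
  (0 < dsc s -> pN <= s - phid) /\ (dsc s < 1 -> s - phid <= pN).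

Let cc := pN + phid.

Let hide_below w : S w -> sc w < cc -> hide w = 1.
Proof.
move=> [/disc[to_disc _] _] below; rewrite /hide; suff -> : dsc (sc w) = 0 by rewrite subr0.
have /andP[d0 _] := dsc01 (sc w); have [/to_disc|] := ltP 0 (dsc (sc w)).
  by rewrite /cc in below; lra.
by move=> d_le0; apply/eqP; rewrite eq_le d_le0 d0.
Qed.

Let hide_above w : S w -> cc < sc w -> hide w = 0.
Proof.
move=> [/disc[_ to_hide] _] above; rewrite /hide; suff -> : dsc (sc w) = 1 by rewrite subrr.
have /andP[_ d1] := dsc01 (sc w); have [/to_hide|] := ltP (dsc (sc w)) 1.
  by rewrite /cc in above; lra.
by move=> d_ge1; apply/eqP; rewrite eq_le d_ge1 d1.
Qed.

(* On S, hiding is a step function of the score, to which unbiasedness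
   (stated for indicators) extends by linearity. *)
Lemma unbiased_hide :
  \int[P]_w (theta w * (1 - dsc (sc w))) = \int[P]_w (sc w * (1 - dsc (sc w))).
Proof.
pose L : set R := [set` `]-oo, cc[]; pose E : set R := [set cc].
have mL : measurable L by exact: measurable_itv.
have mE : measurable E by exact: measurable_set1.
pose step s := \1_L s + (1 - dsc cc) * \1_E s.
have mstep : measurable_fun setT (step \o sc).
  apply: measurableT_comp => //; apply: measurable_funD; first exact: measurable_indic.
  by apply: measurable_funM => //; exact: measurable_indic.
have hide_step w : S w -> hide w = step (sc w).
  move=> Sw; rewrite /step !indicE /L /E mem_setE in_itv /= in_set1.
  have [below|above|at_cc] := ltgtP (sc w) cc.
  - by rewrite hide_below //= mulr0 addr0.
  - by rewrite hide_above //= mulr0 addr0.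
  - by rewrite /hide at_cc /= mulr1 add0r.
have step_eq (X : {RV P >-> R}) :
    \int[P]_w (X w * hide w) = \int[P]_w (X w * step (sc w)).
  apply: (eq_Rintegral_full mS PS); [exact: measurable_funM|exact: measurable_funM|].
  by move=> w /hide_step ->.
by rewrite !step_eq unbiased_step.
Qed.

Lemma null_value_le_mean :
  \int[P]_w (theta w * (1 - dsc (sc w))) <= mu * \int[P]_w (1 - dsc (sc w)).
Proof.
rewrite unbiased_hide; set q := \int[P]_w (1 - dsc (sc w)).
have q01 : 0 <= q <= 1.
  rewrite /q; apply/andP; split; first by apply: Rintegral_ge0 => w _; case/andP: (hide01 w).
  rewrite -[leRHS](Rintegral_cst_probability P).
  apply: (le_Rintegral_full mS PS) => [||w _]; [exact: integrable_hide|exact: integrable_cst|].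
  by case/andP: (hide01 w).
have q_sc_int : P.-integrable setT (EFin \o (fun w => q * sc w)) :=
  integrableZl measurableT q integrable_sc.
have cc_hide_int : P.-integrable setT (EFin \o (fun w => cc * hide w)) :=
  integrableZl measurableT cc integrable_hide.
have sum_int : P.-integrable setT (EFin \o (fun w => q * sc w + cc * hide w)) :=
  integrableD measurableT q_sc_int cc_hide_int.
have affine_int : P.-integrable setT (EFin \o (fun w => q * sc w + cc * hide w - cc * q)) :=
  integrableB measurableT sum_int (integrable_cst (cc * q)).
have cov : \int[P]_w (sc w * hide w) <= \int[P]_w (q * sc w + cc * hide w - cc * q).
  apply: (le_Rintegral_full mS PS) => //; first exact: integrableMl01.
  move=> w Sw; have := threshold_cov_le0 q01 (hide_below Sw) (hide_above Sw).
  nra.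
rewrite (RintegralB measurableT sum_int (integrable_cst _)) in cov.
rewrite (RintegralD measurableT q_sc_int cc_hide_int) in cov.
rewrite (RintegralZl q measurableT integrable_sc) Rintegral_sc in cov.
rewrite (RintegralZl cc measurableT integrable_hide) in cov.
rewrite (Rintegral_cst_probability P (cc * q)) in cov.
have hide_q : \int[P]_w hide w = q by [].
by rewrite hide_q in cov; lra.
Qed.

End disclosure_rule.

Lemma null_price_le_mean tau dsc pN :
  equilibrium theta sc thl thh phit phid tau dsc pN -> tau < 1 -> pN <= mu.
Proof.
move=> [/andP[tau0 _] [mdsc dsc01] disc _ [_ bayes]] tau_lt1.
move: bayes; rewrite prob_nullE // value_nullE // lte_fin -EFinM.
set q := \int[P]_w (1 - dsc (sc w)).
set A := \int[P]_w (theta w * (1 - dsc (sc w))).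
have q0 : 0 <= q.
  by apply: Rintegral_ge0 => w _; have /andP[_ d1] := dsc01 (sc w); rewrite subr_ge0.
have null_pos : 0 < 1 - tau + tau * q by have := mulr_ge0 tau0 q0; lra.
move=> /(_ null_pos) [bayes].
have A_le : A <= mu * q := null_value_le_mean mdsc dsc01 disc.
rewrite -(ler_pM2r null_pos); have := ler_wpM2l tau0 A_le; lra.
Qed.

Lemma equilibrium_tested_surely :
  (phit%:E < \int[distribution P sc]_(s in `[c, thh]) (s - c)%:E)%E ->
  forall tau dsc pN, equilibrium theta sc thl thh phit phid tau dsc pN -> tau = 1.
Proof.
rewrite gain_distribution lte_fin => gain_gt tau dsc pN eqm.
have [tau_lt1|tau_ge1] := ltP tau 1.
  have := null_price_gt_mean gain_gt eqm tau_lt1.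
  have := null_price_le_mean eqm tau_lt1; lra.
by case: eqm => /andP[_ tau_le1] *; apply/eqP; rewrite eq_le tau_le1 tau_ge1.
Qed.

Lemma equilibrium_untested :
  (\int[distribution P sc]_(s in `[c, thh]) (s - c)%:E <= phit%:E)%E ->
  exists dsc pN, equilibrium theta sc thl thh phit phid 0 dsc pN.
Proof.
rewrite gain_distribution lee_fin => gain_le; exists \1_J, mu; split.
- by rewrite lexx ler01.
- by split; [exact: measurable_indic|exact: indic01].
- move=> s /andP[_ s_le]; rewrite indicE /J mem_setE in_itv /= s_le andbT /c.
  have [cs|sc_] := boolP (mu + phid <= s); split; rewrite ?ltxx ?ltr01 //= => _.
    lra.
  by rewrite -ltNge in sc_; lra.
- split; first by rewrite ltxx.
  move=> _; have pay_int : P.-integrable setT (EFin \o (fun w => mu + gain w)) :=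
    integrableD measurableT (integrable_cst mu) integrable_gain.
  rewrite /test_payoff.
  have -> : (\int[P]_w ((\1_J (sc w) * (sc w - phid) + (1 - \1_J (sc w)) * mu)%:E) =
             (\int[P]_w (mu + gain w))%:E)%E.
    rewrite EFin_Rintegral //.
    by apply: eq_integral => w _; rewrite /gain /c; congr EFin; ring.
  rewrite RintegralD //; last exact: integrable_cst.
  by rewrite Rintegral_cst_probability -EFinD lee_fin; lra.
- split; first exact: mean_between.
  move=> _; rewrite /prob_null /value_null subr0 mul0e adde0 mul1e mul0e adde0.
  by rewrite theta_mean mule1.
Qed.

End induced_game.

Theorem lemma1 (R : realType) (dd : measure_display) (Omega : measurableType dd)
    (P : probability Omega R) (theta sc : {RV P >-> R})
    (thl thh mu phit phid : R) :
  0 <= thl -> thl < thh ->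
  (* F = law of theta: support in [thl, thh] with extreme points thl, thh *)
  P [set w | thl <= theta w <= thh] = 1%E ->
  (forall e, 0 < e -> (0 < P [set w | (theta w < thl + e)%R])%E) ->
  (forall e, 0 < e -> (0 < P [set w | (thh - e < theta w)%R])%E) ->
  (* mu is the mean of F *)
  (\int[P]_w (theta w)%:E)%E = mu%:E ->
  (* the test: scores lie in [thl, thh] and the test is unbiased, E[theta | s] = s *)
  P [set w | thl <= sc w <= thh] = 1%E ->
  (forall B : set R, measurable B ->
     (\int[P]_(w in sc @^-1` B) (theta w)%:E = \int[P]_(w in sc @^-1` B) (sc w)%:E)%E) ->
  let G := distribution P sc in
  ((phit%:E < \int[G]_(s in `[(mu + phid)%R, thh]) (s - (mu + phid))%:E)%E ->
     forall tau dsc pN, equilibrium theta sc thl thh phit phid tau dsc pN -> tau = 1)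
  /\
  ((\int[G]_(s in `[(mu + phid)%R, thh]) (s - (mu + phid))%:E <= phit%:E)%E ->
     exists dsc pN, equilibrium theta sc thl thh phit phid 0 dsc pN).
Proof.
move=> _ _ theta_between _ _ theta_mean sc_between unbiased G; split.
- exact: equilibrium_tested_surely theta_between theta_mean sc_between unbiased.
- exact: equilibrium_untested theta_between theta_mean sc_between.
Qed.
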